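(* The map $\phi : \mathbf{PM}_k \to \mathbf{PM}_k^\star$ linearly defined for any $k$-packed matrix $M$ by $\phi(\mathbf{F}_M) := \mathbf{F}^\star_{M^T}$ is a Hopf isomorphism.
   Context: Let $k \geq 1$, $A_k := \{0,1,\dots,k\}$. A $k$-packed matrix of size $n$ is an $n\times n$ matrix with entries in $A_k$ with at least one nonzero entry in each row and column. $\mathbf{PM}_k$ is the bigraded combinatorial Hopf algebra with fundamental basis $(\mathbf{F}_M)$ indexed by $k$-packed matrices, with product $\mathbf{F}_{M_1}\cdot\mathbf{F}_{M_2} = \sum_{M \in \mathrm{Sh}_c(M_1,M_2)} \mathbf{F}_M$ (for sizes $n_1,n_2$, $\mathrm{Sh}_c(M_1,M_2)$ is the set of all matrices obtained by shuffling the columns of $M_1$ with an $n_2 \times n_1$ zero block placed below it, with the columns of $M_2$ with an $n_1\times n_2$ zero block placed above it) and coproduct $\Delta(\mathbf{F}_M) = \sum_{M = [M_1|M_2]} \mathbf{F}_{\operatorname{cp}(M_1)} \otimes \mathbf{F}_{\operatorname{cp}(M_2)}$ (sum over splittings of $M$ into left and right column blocks whose compressions, obtained by deleting null rows and columns, are square). $\mathbf{PM}_k^\star$ is the bigraded dual Hopf algebra, with $(\mathbf{F}^\star_M)$ the adjoint basis of $(\mathbf{F}_M)$; its product shuffles rows ($\mathbf{F}^\star_{M_1}\cdot\mathbf{F}^\star_{M_2} = \sum \mathbf{F}^\star_M$ over all $M$ obtained by shuffling the rows of $[M_1 \mid 0_{n_1\times n_2}]$ with the rows of $[0_{n_2 \times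 n_1} \mid M_2]$) and its coproduct splits into top and bottom row blocks with square compressions. $M^T$ is the transpose of $M$. *)

From HB Require Import structures.
From mathcomp Require Import all_boot all_order all_algebra.
From mathcomp Require Import finmap.
From mathcomp Require Import monalg.

Set Implicit Arguments.
Unset Strict Implicit.
Unset Printing Implicit Defensive.

Import GRing.Theory.
Local Open Scope ring_scope.

Definition kmat (k n : nat) := 'M['I_k.+1]_n.

Definition packed (k n : nat) (M : kmat k n) : bool :=
  [forall i : 'I_n, exists j : 'I_n, M i j != ord0] &&
  [forall j : 'I_n, exists i : 'I_n, M i j != ord0].

Definition pmat (k n : nat) := {M : kmat k n | packed M}.

(* all k-packed matrices (of all sizes): the index set of the bases *)
Definition PMat (k : nat) := {n : nat & pmat k n}.

Definition psize k (A : PMat k) : nat := tag A.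
Definition pmx k (A : PMat k) : kmat k (psize A) := val (tagged A).

(* entry (i,j) as a natural number, 0 outside the matrix *)
Definition mget k n (M : kmat k n) (i j : nat) : nat :=
  match (insub i : option 'I_n), (insub j : option 'I_n) with
  | Some i', Some j' => nat_of_ord (M i' j')
  | _, _ => 0%N
  end.

Lemma packed_tr k n (M : kmat k n) : packed M -> packed M^T.
Proof.
case/andP=> /forallP hr /forallP hc; apply/andP; split; apply/forallP.
- move=> i; case/existsP: (hc i) => j hj; apply/existsP; exists j; by rewrite mxE.
- move=> j; case/existsP: (hr j) => i hi; apply/existsP; exists i; by rewrite mxE.
Qed.

Definition ptr k (A : PMat k) : PMat k :=
  Tagged (pmat k) (exist (@packed k (psize A)) (pmx A)^T (packed_tr (valP (tagged A)))).

Lemma packed_empty k : packed (const_mx ord0 : kmat k 0).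
Proof. by apply/andP; split; apply/forallP; case. Qed.

Definition pempty k : PMat k :=
  Tagged (pmat k) (exist (@packed k 0) (const_mx ord0) (packed_empty k)).

Definition rk n (S : {set 'I_n}) (j : 'I_n) : nat := #|[set j' in S | (j' < j)%N]|.

(* M (size n1+n2) is in Sh_c(M1,M2): shuffle of the columns of [M1; 0_{n2 x n1}]
   with the columns of [0_{n1 x n2}; M2]; S = positions of the columns of the
   first block. *)
Definition shufc k n1 n2 (M1 : kmat k n1) (M2 : kmat k n2) (M : kmat k (n1 + n2)) : bool :=
  [exists S : {set 'I_(n1 + n2)}, (#|S| == n1) &&
    [forall i : 'I_(n1 + n2), forall j : 'I_(n1 + n2),
      nat_of_ord (M i j) ==
        (if j \in S then (if (i < n1)%N then mget M1 i (rk S j) else 0%N)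
         else (if (n1 <= i)%N then mget M2 (i - n1) (rk (~: S) j) else 0%N))]].

(* M (size n1+n2) is obtained by shuffling the rows of [M1 | 0_{n1 x n2}]
   with the rows of [0_{n2 x n1} | M2]; S = positions of the rows of the
   first block. *)
Definition shufr k n1 n2 (M1 : kmat k n1) (M2 : kmat k n2) (M : kmat k (n1 + n2)) : bool :=
  [exists S : {set 'I_(n1 + n2)}, (#|S| == n1) &&
    [forall i : 'I_(n1 + n2), forall j : 'I_(n1 + n2),
      nat_of_ord (M i j) ==
        (if i \in S then (if (j < n1)%N then mget M1 (rk S i) j else 0%N)
         else (if (n1 <= j)%N then mget M2 (rk (~: S) i) (j - n1) else 0%N))]].

(* compression of an r x c matrix (given by its entries f): delete null rows
   and null columns; defined (Some) only when the result is square. *)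
Definition cp k (r c : nat) (f : nat -> nat -> nat) : option (PMat k) :=
  let Rs := [seq i <- iota 0 r | has (fun j => f i j != 0%N) (iota 0 c)] in
  let Cs := [seq j <- iota 0 c | has (fun i => f i j != 0%N) (iota 0 r)] in
  if size Rs == size Cs then
    omap (fun M => Tagged (pmat k) M)
      (insub (\matrix_(i < size Rs, j < size Rs)
                 (inord (f (nth 0%N Rs i) (nth 0%N Cs j)) : 'I_k.+1)) : option (pmat k (size Rs)))
  else None.

Definition FM (R : ringType) (K : choiceType) := {malg R[K]}.

(* the module spanned by (F_M) (resp. (F*_M)) *)
Definition PM (k : nat) (R : ringType) := FM R (PMat k).
(* the tensor square: free module on pairs of basis elements *)
Definition PM2 (k : nat) (R : ringType) := FM R (PMat k * PMat k)%type.

Definition bF k (R : ringType) (A : PMat k) : PM k R := << A >>.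

Definition linext (R : ringType) (K : choiceType) (V : lmodType R)
  (f : K -> V) (x : {malg R[K]}) : V :=
  \sum_(a <- msupp x) x@_a *: f a.

Definition bilinext (R : ringType) (K : choiceType) (V : lmodType R)
  (f : K -> K -> V) (x y : {malg R[K]}) : V :=
  \sum_(a <- msupp x) \sum_(b <- msupp y) (x@_a * y@_b) *: f a b.

Definition tens k (R : ringType) (x y : PM k R) : PM2 k R :=
  bilinext (fun a b => << (a, b) >> : PM2 k R) x y.

Definition tmap k (R : ringType) (f : PM k R -> PM k R) (t : PM2 k R) : PM2 k R :=
  linext (fun ab : PMat k * PMat k => tens (f (bF R ab.1)) (f (bF R ab.2))) t.

Definition prodF_basis k (R : ringType) (A B : PMat k) : PM k R :=
  \sum_(M : pmat k (psize A + psize B) | shufc (pmx A) (pmx B) (val M))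
     bF R (Tagged (pmat k) M).

Definition prodF k (R : ringType) : PM k R -> PM k R -> PM k R :=
  bilinext (@prodF_basis k R).

Definition oneF k (R : ringType) : PM k R := bF R (pempty k).

(* splittings M = [M1 | M2] into left (p columns) and right blocks *)
Definition coprodF_basis k (R : ringType) (A : PMat k) : PM2 k R :=
  let n := psize A in
  \sum_(p < n.+1)
    match cp k n p (fun i j => mget (pmx A) i j),
          cp k n (n - p) (fun i j => mget (pmx A) i (p + j)) with
    | Some X, Some Y => << (X, Y) >>
    | _, _ => 0
    end.

Definition coprodF k (R : ringType) : PM k R -> PM2 k R :=
  linext (@coprodF_basis k R).

Definition counitF k (R : ringType) : PM k R -> R^o :=
  linext (fun A : PMat k => ((psize A == 0%N)%:R : R^o)).

Definition prodFd_basis k (R : ringType) (A B : PMat k) : PM k R :=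
  \sum_(M : pmat k (psize A + psize B) | shufr (pmx A) (pmx B) (val M))
     bF R (Tagged (pmat k) M).

Definition prodFd k (R : ringType) : PM k R -> PM k R -> PM k R :=
  bilinext (@prodFd_basis k R).

Definition oneFd k (R : ringType) : PM k R := bF R (pempty k).

(* splittings M = [M1 ; M2] into top (p rows) and bottom blocks *)
Definition coprodFd_basis k (R : ringType) (A : PMat k) : PM2 k R :=
  let n := psize A in
  \sum_(p < n.+1)
    match cp k p n (fun i j => mget (pmx A) i j),
          cp k (n - p) n (fun i j => mget (pmx A) (p + i) j) with
    | Some X, Some Y => << (X, Y) >>
    | _, _ => 0
    end.

Definition coprodFd k (R : ringType) : PM k R -> PM2 k R :=
  linext (@coprodFd_basis k R).

Definition counitFd k (R : ringType) : PM k R -> R^o :=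
  linext (fun A : PMat k => ((psize A == 0%N)%:R : R^o)).

Definition phi k (R : ringType) : PM k R -> PM k R :=
  linext (fun A : PMat k => bF R (ptr A)).

From HB Require Import structures.
From mathcomp Require Import all_boot all_order all_algebra.
From mathcomp Require Import finmap monalg.

(* Transposition is an involution on k-packed matrices which exchanges the
   two sides of every structure map: a column shuffle of (M1, M2) transposes
   to a row shuffle of (M1^T, M2^T), a splitting into left and right column
   blocks transposes to a splitting into top and bottom row blocks, and
   compression commutes with transposition.  Hence phi, the linear extension
   of M |-> M^T, is its own inverse and intertwines each structure map with
   its dual; checking this on basis vectors suffices by linearity. *)

Set Implicit Arguments.
Unset Strict Implicit.
Import GRing.Theory.
Local Open Scope ring_scope.

Section LinearExtension.
Variables (R : nzRingType) (K : choiceType) (V : lmodType R).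

Lemma linextE (f : K -> V) (x : {malg R[K]}) (d : {fset K}) :
  (msupp x `<=` d)%fset -> linext f x = \sum_(a <- d) x@_a *: f a.
Proof.
move=> le; rewrite /linext (big_fset_incl _ le) // => a _ /mcoeff_outdom ->.
by rewrite scale0r.
Qed.

Lemma linextZD (f : K -> V) c x y :
  linext f (c *: x + y) = c *: linext f x + linext f y.
Proof.
set d := (msupp x `|` msupp y `|` msupp (c *: x + y))%fset.
have sx : (msupp x `<=` d)%fset by rewrite /d -fsetUA fsubsetUl.
have sy : (msupp y `<=` d)%fset by rewrite /d fsetUC fsetUA fsubsetUr.
have sxy : (msupp (c *: x + y) `<=` d)%fset by rewrite /d fsubsetUr.
rewrite (linextE _ sx) (linextE _ sy) (linextE _ sxy) scaler_sumr -big_split.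
by apply: eq_bigr => a _; rewrite mcoeffD mcoeffZ scalerDl scalerA.
Qed.

Lemma linextU (f : K -> V) a : linext f << a >> = f a.
Proof. by rewrite (linextE _ msuppU_le) big_seq_fset1 mcoeffUU scale1r. Qed.

Lemma eq_linext (f g : K -> V) x : f =1 g -> linext f x = linext g x.
Proof. by move=> fg; apply: eq_bigr => a _; rewrite fg. Qed.

Lemma linext_malgU x : linext (fun a : K => << a >> : {malg R[K]}) x = x.
Proof.
rewrite [RHS]monalgE; apply: eq_bigr => a _.
by apply/malgP => b; rewrite mcoeffZ !mcoeffU mulr_natr.
Qed.

Lemma bilinextE (f : K -> K -> V) x y :
  bilinext f x y = linext (fun a => linext (f a) y) x.
Proof.
apply: eq_bigr => a _; rewrite scaler_sumr.
by apply: eq_bigr => b _; rewrite scalerA.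
Qed.

Section LinearMap.
Variables (W : lmodType R) (L : V -> W).
Hypothesis linL : forall c u v, L (c *: u + v) = c *: L u + L v.

Lemma linmap0 : L 0 = 0.
Proof.
have := linL (-1) 0 0; rewrite scaler0 addr0 scaleN1r => L0.
by rewrite {1}L0 addNr.
Qed.

Lemma linmapD u v : L (u + v) = L u + L v.
Proof. by have := linL 1 u v; rewrite !scale1r. Qed.

Lemma linmap_sum I (r : seq I) (P : pred I) (F : I -> V) :
  L (\sum_(i <- r | P i) F i) = \sum_(i <- r | P i) L (F i).
Proof. exact: (big_morph L linmapD linmap0). Qed.

Lemma linmap_linext (f : K -> V) x : L (linext f x) = linext (L \o f) x.
Proof.
rewrite linmap_sum; apply: eq_bigr => a _.
by rewrite -[_ *: f a]addr0 linL linmap0 addr0.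
Qed.

End LinearMap.
End LinearExtension.

Section Transposition.
Variable k : nat.

Lemma ptrK : involutive (@ptr k).
Proof. by case=> n [M pM]; congr existT; apply: val_inj; exact: trmxK. Qed.

Lemma mget_tr n (M : kmat k n) i j : mget M^T i j = mget M j i.
Proof.
rewrite /mget; case: (insub i) => [i'|]; case: (insub j) => [j'|] //.
by rewrite mxE.
Qed.

Lemma shufr_tr n1 n2 (A : kmat k n1) (B : kmat k n2) (M : kmat k (n1 + n2)) :
  shufr A^T B^T M^T = shufc A B M.
Proof.
apply/existsP/existsP => -[S /andP[cardS /forallP eqM]]; exists S.
all: rewrite cardS; apply/forallP => i; apply/forallP => j.
all: by move/forallP: (eqM j) => /(_ i); rewrite !mxE !mget_tr.
Qed.

Lemma insub_packed_tr n (M : kmat k n) :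
  omap (Tagged (pmat k)) (insub M^T : option (pmat k n)) =
  omap (@ptr k) (omap (Tagged (pmat k)) (insub M : option (pmat k n))).
Proof.
have [pM|npM] := boolP (packed M).
  rewrite (insubT (@packed k n) pM) (insubT (@packed k n) (packed_tr pM)) /=.
  by congr Some; congr existT; apply: val_inj.
rewrite (insubF _ (negbTE npM)) insubF //.
by apply: contraNF npM => /packed_tr; rewrite trmxK.
Qed.

Lemma cp_tr r c (f g : nat -> nat -> nat) : (forall i j, g i j = f j i) ->
  cp k c r g = omap (@ptr k) (cp k r c f).
Proof.
move=> gf; rewrite /cp.
have -> : [seq i <- iota 0 c | has (fun j => g i j != 0%N) (iota 0 r)] =
          [seq j <- iota 0 c | has (fun i => f i j != 0%N) (iota 0 r)].
  by apply: eq_filter => i; apply: eq_has => j; rewrite gf.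
have -> : [seq j <- iota 0 r | has (fun i => g i j != 0%N) (iota 0 c)] =
          [seq i <- iota 0 r | has (fun j => f i j != 0%N) (iota 0 c)].
  by apply: eq_filter => i; apply: eq_has => j; rewrite gf.
move: (nth 0%N _) (nth 0%N _) (size _) (size _) => rows cols nr nc.
have [<-|//] := eqVneq nr nc; rewrite -insub_packed_tr.
by congr (omap _ (insub _)); apply/matrixP => i j; rewrite !mxE gf.
Qed.

Definition trpmat n (M : pmat k n) : pmat k n :=
  exist _ (val M)^T (packed_tr (valP M)).

Lemma trpmat_inj n : injective (@trpmat n).
Proof.
move=> M N /(congr1 val) /= /(congr1 trmx); rewrite !trmxK; exact: val_inj.
Qed.

End Transposition.

Section Phi.
Variables (k : nat) (R : nzRingType).

Lemma phi_linear (a : R) (x y : PM k R) : phi (a *: x + y) = a *: phi x + phi y.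
Proof. exact: linextZD. Qed.

Lemma phiU (A : PMat k) : phi (bF R A) = bF R (ptr A).
Proof. exact: linextU. Qed.

Lemma linext_phi (V : lmodType R) (g : PMat k -> V) (x : PM k R) :
  linext g (phi x) = linext (g \o @ptr k) x.
Proof.
rewrite /phi (linmap_linext (linextZD g)); apply: eq_linext => a.
exact: linextU.
Qed.

Lemma phiK : involutive (@phi k R).
Proof.
move=> x; rewrite /phi [in LHS]linext_phi -[RHS]linext_malgU.
by apply: eq_linext => a /=; rewrite ptrK.
Qed.

Lemma phi_prodF_basis (A B : PMat k) :
  phi (prodF_basis R A B) = prodFd_basis R (ptr A) (ptr B).
Proof.
rewrite /prodF_basis (linmap_sum (@phi_linear)) (reindex_inj (@trpmat_inj k _)).
apply: eq_big => [M|M _]; first by rewrite -[in RHS](trmxK (val M)) shufr_tr.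
by rewrite phiU; congr (bF R _); congr existT; apply: val_inj; exact: trmxK.
Qed.

Lemma phi_prodF (x y : PM k R) : phi (prodF x y) = prodFd (phi x) (phi y).
Proof.
rewrite /prodF /prodFd !bilinextE (linmap_linext (@phi_linear)) linext_phi.
apply: eq_linext => a /=; rewrite linext_phi (linmap_linext (@phi_linear)).
apply: eq_linext => b; exact: phi_prodF_basis.
Qed.

Lemma phi_oneF : phi (oneF k R) = oneFd k R.
Proof.
by rewrite phiU; congr (bF R _); congr existT; apply: val_inj; apply/matrixP => -[].
Qed.

Lemma tmap_phi_linear (c : R) (u v : PM2 k R) :
  tmap (@phi k R) (c *: u + v) = c *: tmap (@phi k R) u + tmap (@phi k R) v.
Proof. exact: linextZD. Qed.

Lemma tensU (a b : PMat k) : tens (bF R a) (bF R b) = << (a, b) >>.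
Proof. by rewrite /tens bilinextE /bF !linextU. Qed.

Lemma tmap_phiU (X Y : PMat k) :
  tmap (@phi k R) << (X, Y) >> = << (ptr X, ptr Y) >>.
Proof.
rewrite [LHS](linextU (fun ab => tens (phi (bF R ab.1)) (phi (bF R ab.2)))) /=.
by rewrite (f_equal2 (@tens k R) (phiU X) (phiU Y)) tensU.
Qed.

Lemma tmap_phi_coprodF_basis (A : PMat k) :
  tmap (@phi k R) (coprodF_basis R A) = coprodFd_basis R (ptr A).
Proof.
rewrite /coprodF_basis (linmap_sum tmap_phi_linear); apply: eq_bigr => p _.
rewrite (@cp_tr k _ p (fun i j => mget (pmx A) i j) _ (fun i j => mget_tr _ _ _)).
rewrite (@cp_tr k _ (psize A - p) (fun i j => mget (pmx A) i (p + j)) _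
           (fun i j => mget_tr _ _ _)).
case: (cp k _ p _) => [X|]; case: (cp k _ (_ - p) _) => [Y|] /=.
all: by rewrite ?tmap_phiU ?(linmap0 tmap_phi_linear).
Qed.

Lemma phi_coprodF (x : PM k R) : tmap (@phi k R) (coprodF x) = coprodFd (phi x).
Proof.
rewrite /coprodF /coprodFd (linmap_linext tmap_phi_linear) linext_phi.
apply: eq_linext => a; exact: tmap_phi_coprodF_basis.
Qed.

Lemma phi_counitF (x : PM k R) : counitFd (phi x) = counitF x.
Proof. exact: linext_phi. Qed.

End Phi.

Unset Implicit Arguments.
Theorem proposition2p5 (k : nat) (hk : (0 < k)%N) (R : fieldType) :
  ((forall (a : R) (x y : PM k R), phi (a *: x + y) = a *: phi x + phi y) /\
   bijective (@phi k R)) /\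
  ((forall x y : PM k R, phi (prodF x y) = prodFd (phi x) (phi y)) /\
   phi (oneF k R) = oneFd k R) /\
  ((forall x : PM k R, tmap (@phi k R) (coprodF x) = coprodFd (phi x)) /\
   (forall x : PM k R, counitFd (phi x) = counitF x)).
Proof.
split; first by split; [exact: phi_linear | exists (@phi k R); exact: phiK].
split; split.
- exact: phi_prodF.
- exact: phi_oneF.
- exact: phi_coprodF.
- exact: phi_counitF.
Qed.
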